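(* Let $\mathbf A$ be a pseudo-Kleene lattice. Then $\mathbf A$ is super-paraorthomodular if and only if for all $x,y\in A$: $x\leq y$ implies $y\land(x\lor x')=x\lor(x'\land y)$.
   Context: A pseudo-Kleene lattice is an algebra $(A,\land,\lor,{}',0,1)$ that is a bounded lattice with an antitone involution ${}'$ ($x\leq y\Rightarrow y'\leq x'$, $x''=x$) satisfying $x\land x'\leq y\lor y'$. It is super-paraorthomodular if for all $x,y$: (SP1) $x\leq y$ and $x'\land y=(x\land x')\lor(y\land y')$ imply $y\land(x\lor x')=x\lor(y\land y')$; (SP2) $x\leq y$ implies $(x\land x')\lor(y\land y')=(x'\land y)\land(x'\land y)'$. *)

From HB Require Import structures.
From mathcomp Require Import all_boot all_order.
Set Implicit Arguments. Unset Strict Implicit. Unset Printing Implicit Defensive.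
Import Order.TTheory.
Local Open Scope order_scope.

Definition pseudo_kleene {d} (L : tbLatticeType d) (c : L -> L) : Prop :=
  (forall x y : L, x <= y -> c y <= c x) /\
  (forall x : L, c (c x) = x) /\
  (forall x y : L, x `&` c x <= y `|` c y).

Definition SP1 {d} (L : tbLatticeType d) (c : L -> L) : Prop :=
  forall x y : L, x <= y ->
    c x `&` y = (x `&` c x) `|` (y `&` c y) ->
    y `&` (x `|` c x) = x `|` (y `&` c y).

Definition SP2 {d} (L : tbLatticeType d) (c : L -> L) : Prop :=
  forall x y : L, x <= y ->
    (x `&` c x) `|` (y `&` c y) = (c x `&` y) `&` c (c x `&` y).

Definition super_paraorthomodular {d} (L : tbLatticeType d) (c : L -> L) : Prop :=
  SP1 c /\ SP2 c.

(* Applying the involution to the law for [x <= y] at the pair [y' <= x'] shows it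
   is equivalent to the same modular-type law with [y'] in place of [x'].
   Absorption turns the first law into (SP1); two uses of the second give (SP2).
   Conversely, for [a <= b] put [v := b /\ (a \/ b')], so that [a <= v <= b]:
   (SP2) at [a <= b] computes [a' /\ v], which shows that the hypothesis of (SP1)
   holds at [a <= v]; (SP1) then collapses [v] to [a \/ (b /\ b')]. *)
From mathcomp Require Import all_boot all_order.
Set Implicit Arguments. Unset Strict Implicit. Unset Printing Implicit Defensive.
Import Order.TTheory.
Local Open Scope order_scope.

Section AntitoneInvolution.

Variables (d : Order.disp_t) (L : latticeType d) (c : L -> L).
Hypotheses (c_anti : forall x y : L, x <= y -> c y <= c x) (cK : involutive c).

Lemma c_le (x y : L) : (c x <= c y) = (y <= x).
Proof. by apply/idP/idP => [/c_anti|/c_anti]; rewrite ?cK. Qed.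

Lemma c_meet (x y : L) : c (x `&` y) = c x `|` c y.
Proof.
apply/le_anti/andP; split; last by rewrite leUx !c_le leIl leIr.
by rewrite -[c x `|` c y]cK c_le lexI -{2}[x]cK -{3}[y]cK !c_le leUl leUr.
Qed.

Lemma c_join (x y : L) : c (x `|` y) = c x `&` c y.
Proof. by rewrite -[x]cK -[y]cK -c_meet !cK. Qed.

Definition modular_compl_lower : Prop :=
  forall x y : L, x <= y -> y `&` (x `|` c x) = x `|` (c x `&` y).

Definition modular_compl_upper : Prop :=
  forall x y : L, x <= y -> y `&` (x `|` c y) = x `|` (y `&` c y).

Lemma modular_compl_lower_upper : modular_compl_lower <-> modular_compl_upper.
Proof.
split=> law x y xy; move: (law _ _ (c_anti xy)).
  by move/(congr1 c); rewrite !(c_meet, c_join, cK) => E; rewrite [x `|` _]joinC -E.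
by move/(congr1 c); rewrite !(c_meet, c_join, cK) => <-; rewrite meetC.
Qed.

End AntitoneInvolution.

Section SuperParaorthomodular.

Variables (d : Order.disp_t) (L : tbLatticeType d) (c : L -> L).
Hypotheses (c_anti : forall x y : L, x <= y -> c y <= c x) (cK : involutive c).

Lemma SP1_of_modular_compl_lower : modular_compl_lower c -> SP1 c.
Proof. by move=> law x y xy E; rewrite law // E joinA meetKU. Qed.

Lemma SP2_of_modular_compl_upper : modular_compl_upper c -> SP2 c.
Proof.
move=> law x y xy.
have yy_cx : y `&` c y <= c x by rewrite (le_trans (leIr _ _)) ?c_anti.
have := law _ _ yy_cx; rewrite cK => absorb_yy.
rewrite (c_meet c_anti cK) cK -meetA law // [x `|` _]joinC absorb_yy.
by rewrite joinC [c x `&` x]meetC.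
Qed.

Lemma modular_compl_upper_of_SP : SP1 c -> SP2 c -> modular_compl_upper c.
Proof.
move=> sp1 sp2 a b ab.
set v := b `&` (a `|` c b).
have av : a <= v by rewrite lexI ab leUl.
have cv_ca : c v <= c a by exact: c_anti.
have v_aca : v <= a `|` c a by rewrite (le_trans (leIr _ _)) // leU2 ?c_anti.
have bb_v : b `&` c b <= v by rewrite lexI leIl (le_trans (leIr _ _)) ?leUr.
have bb_vv : b `&` c b <= v `&` c v.
  by rewrite lexI bb_v (le_trans (leIr _ _)) ?c_anti ?leIl.
have vv_cav : v `&` c v <= c a `&` v by rewrite lexI leIl (le_trans (leIr _ _)).
have cav_bb : c a `&` v = (a `&` c a) `|` (b `&` c b).
  by rewrite (sp2 a b ab) (c_meet c_anti cK) cK /v meetA.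
have cav_vv : c a `&` v = (a `&` c a) `|` (v `&` c v).
  apply/le_anti/andP; split.
    by rewrite cav_bb leU2.
  by rewrite leUx vv_cav lexI leIr (le_trans (leIl _ _) av).
have v_eq : v = a `|` (v `&` c v) by rewrite -(sp1 a v av cav_vv) (meet_idPl v_aca).
apply/le_anti/andP; split; last by rewrite leUx av bb_v.
by rewrite {1}v_eq leUx leUl (le_trans vv_cav) // cav_bb leU2 ?leIl.
Qed.

End SuperParaorthomodular.

Theorem theorem3p4 (d : Order.disp_t) (L : tbLatticeType d) (c : L -> L) :
  pseudo_kleene c ->
  (super_paraorthomodular c <->
   (forall x y : L, x <= y -> y `&` (x `|` c x) = x `|` (c x `&` y))).
Proof.
move=> [c_anti [cK _]]; have duality := modular_compl_lower_upper c_anti cK.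
split=> [[sp1 sp2] | law].
  exact/duality/(modular_compl_upper_of_SP c_anti cK).
split; first exact: SP1_of_modular_compl_lower.
exact/(SP2_of_modular_compl_upper c_anti cK)/duality.
Qed.
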